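(* Let $G$ be a finite group, let $s \in G^{\#}$ and let $H \in \mathcal{M}(G,s)$ with $b(G,G/H) = b$. Then any total dominating set for $\Gamma(G)$ consisting only of conjugates of $s$ has size at least $b$.
   Context: $G^{\#}$ is the set of non-identity elements of $G$. The generating graph $\Gamma(G)$ has vertex set $G^{\#}$, with $x,y$ adjacent iff $G=\langle x,y\rangle$. A subset $S\subseteq G^{\#}$ is a total dominating set for $\Gamma(G)$ if for every $g\in G^{\#}$ there exists $s\in S$ with $G=\langle g,s\rangle$. $\mathcal{M}(G,g)$ denotes the set of maximal subgroups of $G$ containing $g$. For a group acting faithfully on a finite set $\Omega$, a base is a subset of $\Omega$ whose pointwise stabiliser is trivial and $b(G,\Omega)$ is the minimal size of a base; here $G$ acts on the coset space $G/H$, and $b(G,G/H)\leqslant c$ iff there exist $g_1,\dots,g_c\in G$ with $\bigcap_i H^{g_i}=1$. *)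

From mathcomp Require Import all_boot all_fingroup all_solvable.
Set Implicit Arguments. Unset Strict Implicit. Unset Printing Implicit Defensive.
Local Open Scope group_scope.

(* Adjacency in the generating graph Gamma(G): G = <x, y>. *)
Definition generates (gT : finGroupType) (G : {set gT}) (x y : gT) : bool :=
  <<[set x; y]>> == G.

Definition total_dominating (gT : finGroupType) (G : {set gT}) (S : {set gT}) : Prop :=
  S \subset G^# /\ forall g, g \in G^# -> exists2 s, s \in S & generates G g s.

(* A base for the action of G on the coset space G/H (right cosets Hx, with G
   acting by right multiplication 'Rs): a set B of cosets whose pointwise
   stabiliser in G is trivial. *)
Definition is_base (gT : finGroupType) (G H : {group gT}) (B : {set {set gT}}) : bool :=
  (B \subset rcosets H G) && ('C_G(B | 'Rs) == 1).

Definition base_size (gT : finGroupType) (G H : {group gT}) (b : nat) : Prop :=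
  (exists2 B, is_base G H B & #|B| = b) /\
  (forall B, is_base G H B -> b <= #|B|).

(* If the cosets H g_1, ..., H g_k (with s ^ g_i ranging over S) had a common
   stabiliser x <> 1, then x would lie in every conjugate H ^ g_i, and so
   would the dominating vertex s ^ g_i adjacent to x: the pair x, s ^ g_i would
   generate a subgroup of the proper subgroup H ^ g_i, which is absurd. Hence
   these cosets form a base and b <= k <= |S|. *)
From mathcomp Require Import all_boot all_fingroup all_solvable.
Set Implicit Arguments. Unset Strict Implicit. Unset Printing Implicit Defensive.
Local Open Scope group_scope.

Lemma generates_subG (gT : finGroupType) (G K : {group gT}) (x y : gT) :
  generates G x y -> x \in K -> y \in K -> G \subset K.
Proof.
move/eqP=> <- xK yK; rewrite gen_subG; apply/subsetP=> z.
by case/set2P=> ->.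
Qed.

Lemma astab1_rcoset (gT : finGroupType) (H : {group gT}) (g : gT) :
  'C[H :* g | 'Rs] = H :^ g.
Proof. by rewrite -rcosetE astab1_act astab1Rs. Qed.

Lemma class_transversal (gT : finGroupType) (G : {group gT}) (s : gT)
    (S : {set gT}) :
  S \subset s ^: G -> exists X : {set gT}, [/\ X \subset G, s ^: X = S & #|X| <= #|S|].
Proof.
move=> sSsG; pose rep t := repr [set g in G | s ^ g == t].
have repP t : t \in S -> rep t \in G /\ s ^ rep t = t.
  move=> /(subsetP sSsG) /imsetP [g Gg ->].
  have : rep (s ^ g) \in [set h in G | s ^ h == s ^ g].
    by apply: mem_repr (g) _; rewrite inE Gg eqxx.
  by rewrite inE => /andP [? /eqP].
exists (rep @: S); split; last exact: leq_imset_card.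
- by apply/subsetP=> _ /imsetP [t St ->]; case: (repP t St).
- apply/setP=> t; apply/imsetP/idP=> [[_ /imsetP [u Su ->] ->] | St].
    by case: (repP u Su) => _ ->.
  exists (rep t); first exact: imset_f.
  by case: (repP t St).
Qed.

Section ConjugateDominatingBase.

Variables (gT : finGroupType) (G H : {group gT}) (s : gT).
Hypotheses (properHG : H \proper G) (Hs : s \in H).

Lemma not_generates_in_conjg (g x : gT) :
  x \in H :^ g -> ~~ generates G x (s ^ g).
Proof.
move=> xHg; apply/negP=> genG.
have /subset_leq_card : G \subset H :^ g.
  by apply: generates_subG genG xHg _; rewrite memJ_conjg.
by rewrite cardJg leqNgt proper_card.
Qed.

Lemma conj_dominating_base (X : {set gT}) :
  X \subset G ->
  (forall x, x \in G^# -> exists2 g, g \in X & generates G x (s ^ g)) ->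
  is_base G H [set H :* g | g in X].
Proof.
move=> sXG dom; apply/andP; split.
  apply/subsetP=> _ /imsetP [g Xg ->].
  by rewrite -rcosetE imset_f // (subsetP sXG).
apply/eqP/trivgP/subsetP=> x /setIP [Gx fixB]; apply/set1P/eqP/negPn/negP=> ntx.
have [|g Xg genG] := dom x; first by rewrite !inE ntx.
have : x \in 'C[H :* g | 'Rs].
  by move: fixB; apply/subsetP/astabS; rewrite sub1set; apply: imset_f.
by rewrite astab1_rcoset => /not_generates_in_conjg; rewrite genG.
Qed.

End ConjugateDominatingBase.

Theorem corollary2p3 (gT : finGroupType) (G H : {group gT}) (s : gT) (b : nat) :
  s \in G^# -> maximal H G -> s \in H -> base_size G H b ->
  forall S : {set gT}, S \subset s ^: G -> total_dominating G S -> b <= #|S|.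
Proof.
move=> _ maxH Hs [_ minb] S sSsG [_ domS].
have [X [sXG defS leXS]] := class_transversal sSsG.
have dom x : x \in G^# -> exists2 g, g \in X & generates G x (s ^ g).
  by case/domS=> t; rewrite -defS => /imsetP [g Xg ->]; exists g.
have baseB := conj_dominating_base (maxgroupp maxH) Hs sXG dom.
by rewrite (leq_trans (minb _ baseB)) // (leq_trans (leq_imset_card _ _)).
Qed.
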